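(* Let $\mathcal{C}$ be a permutation class (resp. polyomino class) and let $\mathcal{M}$ be an $m$-basis of $\mathcal{C}$. Then the $p$-basis of $\mathcal{C}$ consists of all permutations (resp. polyominoes) that contain a submatrix belonging to $\mathcal{M}$ and that are minimal (with respect to the pattern order on permutations, resp. on polyominoes) for this property.
   Context: Binary matrices have entries in $\{0,1\}$; $M'\preccurlyeq M$ (submatrix order) means $M'$ is obtained from $M$ by deleting some rows and/or columns. A permutation $\sigma$ of $\{1,\dots,n\}$ is identified with its permutation matrix ($M_\sigma(i,j)=1$ iff $i=\sigma(j)$); the pattern order on permutations is the submatrix order restricted to permutation matrices, and a permutation class is a downward closed set for it. A polyomino is a finite edge-connected union of unit cells of $\mathbb{Z}^2$ up to translation, identified with the binary matrix of its minimal bounding rectangle ($1$ for cells, $0$ otherwise); the pattern order on polyominoes is the submatrix order restricted to polyominoes, and a polyomino class is a downward closed set for it. $Av(\mathcal{M})$ is the set of permutations (resp. polyominoes) with no submatrix in $\mathcal{M}$. The $p$-basis of $\mathcal{C}$ is the set of minimal permutations (resp. polyominoes), for the pattern order, not belonging to $\mathcal{C}$. An $m$-basis of $\mathcal{C}$ is an antichain $\mathcal{M}$ of binary matrices for $\preccurlyeq$ with $\mathcal{C}=Av(\mathcal{M})$. *)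

From mathcomp Require Import all_boot all_order all_algebra.
From Stdlib Require Import Relation_Operators.
Set Implicit Arguments. Unset Strict Implicit. Unset Printing Implicit Defensive.

Record bmat := BMat { nr : nat; nc : nat; mx : 'M[bool]_(nr, nc) }.

Definition submx (M' M : bmat) : Prop :=
  exists (f : 'I_(nr M') -> 'I_(nr M)) (g : 'I_(nc M') -> 'I_(nc M)),
    (forall i1 i2 : 'I_(nr M'), i1 < i2 -> f i1 < f i2) /\
    (forall j1 j2 : 'I_(nc M'), j1 < j2 -> g j1 < g j2) /\
    (forall i j, mx M' i j = mx M (f i) (g j)).

Notation "A <=sub B" := (submx A B) (at level 70).

Definition is_perm_mx (M : bmat) : Prop :=
  nr M = nc M /\
  (forall i, #|[set j | mx M i j]| = 1%N) /\
  (forall j, #|[set i | mx M i j]| = 1%N).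

Definition adj_cell (r c : nat) (x y : 'I_r * 'I_c) : Prop :=
  (x.1 = y.1 /\ (x.2.+1 = y.2 \/ y.2.+1 = x.2)) \/
  (x.2 = y.2 /\ (x.1.+1 = y.1 \/ y.1.+1 = x.1)).

(* Polyominoes, identified with the binary matrix of their minimal bounding
   rectangle: nonempty, every row and column of the bounding box meets the
   polyomino, and the set of cells is edge-connected. *)
Definition is_polyomino (M : bmat) : Prop :=
  (0 < nr M)%N /\ (0 < nc M)%N /\
  (forall i, exists j, mx M i j) /\
  (forall j, exists i, mx M i j) /\
  (forall x y : 'I_(nr M) * 'I_(nc M), mx M x.1 x.2 -> mx M y.1 y.2 ->
     clos_refl_trans _
       (fun u v : 'I_(nr M) * 'I_(nc M) =>
          [/\ mx M u.1 u.2, mx M v.1 v.2 & adj_cell u v]) x y).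

Inductive kind := Perms | Polyominoes.

Definition obj (k : kind) : bmat -> Prop :=
  match k with Perms => is_perm_mx | Polyominoes => is_polyomino end.

(* A permutation class / polyomino class: a set of objects downward closed
   for the pattern order (submatrix order restricted to the objects). *)
Definition is_class (k : kind) (C : bmat -> Prop) : Prop :=
  (forall P, C P -> obj k P) /\
  (forall P Q, obj k P -> obj k Q -> P <=sub Q -> C Q -> C P).

Definition Av (k : kind) (Ms : bmat -> Prop) (P : bmat) : Prop :=
  obj k P /\ forall A, Ms A -> ~ A <=sub P.

Definition antichain (Ms : bmat -> Prop) : Prop :=
  forall A B, Ms A -> Ms B -> A <=sub B -> A = B.

Definition is_m_basis (k : kind) (C Ms : bmat -> Prop) : Prop :=
  antichain Ms /\ forall P, C P <-> Av k Ms P.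

Definition p_basis (k : kind) (C : bmat -> Prop) (P : bmat) : Prop :=
  obj k P /\ ~ C P /\
  forall Q, obj k Q -> Q <=sub P -> Q <> P -> C Q.

Definition contains_some (Ms : bmat -> Prop) (P : bmat) : Prop :=
  exists2 A, Ms A & A <=sub P.

From mathcomp Require Import all_boot all_order all_algebra.
From Stdlib Require Import Classical.
Set Implicit Arguments. Unset Strict Implicit. Unset Printing Implicit Defensive.

(* Once an object avoids C exactly when it contains a matrix of Ms, the
   p-basis (minimal objects outside C) is literally the set of minimal
   objects containing a matrix of Ms. *)

Lemma m_basis_mem (k : kind) (C Ms : bmat -> Prop) (P : bmat) :
  is_m_basis k C Ms -> obj k P -> C P <-> ~ contains_some Ms P.
Proof.
move=> [_ HC] oP; rewrite HC; split.
- by move=> [_ avoid] [A MA sA]; exact: avoid A MA sA.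
- by move=> noA; split=> // A MA sA; apply: noA; exists A.
Qed.

Lemma m_basis_notin (k : kind) (C Ms : bmat -> Prop) (P : bmat) :
  is_m_basis k C Ms -> obj k P -> ~ C P <-> contains_some Ms P.
Proof.
move=> bM oP; rewrite (m_basis_mem bM oP).
by split=> [/NNPP | has_A noA].
Qed.

Theorem proposition8 (k : kind) (C Ms : bmat -> Prop) :
  is_class k C -> is_m_basis k C Ms ->
  forall P : bmat,
    p_basis k C P <->
    (obj k P /\ contains_some Ms P /\
     forall Q, obj k Q -> Q <=sub P -> Q <> P -> ~ contains_some Ms Q).
Proof.
move=> _ bM P; rewrite /p_basis.
split=> -[oP [outP minP]]; split=> //; split.
- exact/(m_basis_notin bM oP).
- by move=> Q oQ sQ nQ; apply/(m_basis_mem bM oQ)/minP.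
- exact/(m_basis_notin bM oP).
- by move=> Q oQ sQ nQ; apply/(m_basis_mem bM oQ)/minP.
Qed.
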